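(* Let $p>0$ and let $(u_n)_{n\ge0}$ be a sequence in $E^1$ with partial sums $s_n=\sum_{k=0}^n u_k$. If the series $\sum u_n$ is $E_p$ summable to $\nu\in E^1$ and $\sqrt{n}\,D(u_n,\overline{0})=O(1)$ as $n\to\infty$, then the series $\sum u_n$ is bounded, i.e. there is $M>0$ with $D(s_n,\overline{0})<M$ for all $n$.
   Context: $E^1$ denotes the set of fuzzy numbers: functions $u:\mathbb{R}\to[0,1]$ that are normal, fuzzy convex, upper semicontinuous, and have compact support $\overline{\{t:u(t)>0\}}$. For $\alpha\in(0,1]$ the $\alpha$-level set is $[u]_\alpha=\{t:u(t)\ge\alpha\}$ and $[u]_0=\overline{\{t:u(t)>0\}}$; each is a compact interval $[u^-_\alpha,u^+_\alpha]$. Addition and scalar multiplication are defined levelwise: $[u+v]_\alpha=[u^-_\alpha+v^-_\alpha,u^+_\alpha+v^+_\alpha]$ and $[ku]_\alpha=k[u]_\alpha$ for $k\in\mathbb{R}$. The metric is $D(u,v)=\sup_{\alpha\in[0,1]}\max\{|u^-_\alpha-v^-_\alpha|,|u^+_\alpha-v^+_\alpha|\}$. $\overline{0}$ is the fuzzy number equal to $1$ at $0$ and $0$ elsewhere. A series $\sum u_n$ of fuzzy numbers is $E_p$ summable to $\nu$ if its sequence of partial sums $(s_n)$ has Euler means $\frac{1}{(p+1)^n}\sum_{k=0}^n\binom{n}{k}p^{n-k}s_k$ converging to $\nu$ in $D$. The paper denotes by $bs(F)$ the set of series of fuzzy numbers with bounded partial sums and states the conclusion as $(u_n)\in bs(F)$.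 *)

From HB Require Import structures.
From mathcomp Require Import all_boot all_order all_algebra.
From mathcomp Require Import all_classical all_reals all_analysis.
Set Implicit Arguments. Unset Strict Implicit. Unset Printing Implicit Defensive.
Import Order.TTheory GRing.Theory Num.Theory.
Import numFieldNormedType.Exports.
Local Open Scope classical_set_scope.
Local Open Scope ring_scope.

Section Fuzzy.
Variable R : realType.

Definition fsupp (u : R -> R) : set R := closure [set t | 0 < u t].

Definition usc (u : R -> R) : Prop :=
  forall t (e : R), 0 < e -> \forall x \near t, u x < u t + e.

Definition fuzzy_number (u : R -> R) : Prop :=
  [/\ (forall t, 0 <= u t <= 1),
      (exists t, u t = 1),
      (forall x y l, 0 <= l <= 1 -> Num.min (u x) (u y) <= u (l * x + (1 - l) * y)),
      usc u &
      compact (fsupp u)].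

Definition level (u : R -> R) (a : R) : set R :=
  if a == 0 then fsupp u else [set t | a <= u t].

Definition lend (u : R -> R) (a : R) : R := inf (level u a).
Definition rend (u : R -> R) (a : R) : R := sup (level u a).

(* Levelwise representation: alpha |-> ([u]_alpha^-, [u]_alpha^+).
   Addition and scalar multiplication of fuzzy numbers are defined levelwise,
   so we carry them out on these representations. *)
Definition lvl := R -> R * R.

Definition levels (u : R -> R) : lvl := fun a => (lend u a, rend u a).

Definition ladd (f g : lvl) : lvl := fun a => ((f a).1 + (g a).1, (f a).2 + (g a).2).
Definition lzero : lvl := fun _ => (0, 0).
Definition lscale (k : R) (f : lvl) : lvl :=
  fun a => if 0 <= k then (k * (f a).1, k * (f a).2) else (k * (f a).2, k * (f a).1).

Definition Dist (f g : lvl) : R :=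
  sup [set d | exists2 a, 0 <= a <= 1 &
         d = Num.max `|(f a).1 - (g a).1| `|(f a).2 - (g a).2|].

Definition fzero : R -> R := fun t => if t == 0 then 1 else 0.

Definition psum (u : nat -> R -> R) (n : nat) : lvl :=
  foldr ladd lzero [seq levels (u k) | k <- iota 0 n.+1].

Definition euler_mean (p : R) (u : nat -> R -> R) (n : nat) : lvl :=
  foldr ladd lzero
    [seq lscale ('C(n, k)%:R * p ^+ (n - k) / (p + 1) ^+ n) (psum u k) | k <- iota 0 n.+1].

End Fuzzy.

(* Fix a level a in [0, 1] and one of the two endpoints.  The endpoints of the
   partial sums s_n are then the partial sums of a real series whose terms obey
   sqrt k |f k| <= A, so |s_k - s_m| <= 2 A |sqrt k - sqrt m|, and whose Euler
   means t_n are eventually bounded, because they converge to an endpoint of nu.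
   The Euler weights of order n form the binomial distribution with parameters
   n and 1/(p+1); for n close to m (p+1) its second moment about m is at most m + 1,
   which turns the square-root modulus into |t_n - s_m| <= 3 A.  All bounds are
   uniform in the level and the endpoint, hence bound D(s_n, 0). *)

From HB Require Import structures.
From mathcomp Require Import all_boot all_order all_algebra.
From mathcomp Require Import all_classical all_reals all_analysis.
From mathcomp Require Import ring lra.
Import Order.TTheory GRing.Theory Num.Theory.
Import numFieldNormedType.Exports.
Local Open Scope classical_set_scope.
Local Open Scope ring_scope.

Set Implicit Arguments. Unset Strict Implicit. Unset Printing Implicit Defensive.

Section EulerWeights.
Variables (F : fieldType) (p : F).

Definition euler_weight n k : F := 'C(n, k)%:R * p ^+ (n - k) / (p + 1) ^+ n.

Lemma euler_moment0 n : \sum_(k < n.+1) 'C(n, k)%:R * p ^+ (n - k) = (p + 1) ^+ n.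
Proof. by rewrite exprDn; apply: eq_bigr => k _; rewrite expr1n mulr1 mulr_natl. Qed.

Lemma euler_moment1 n :
  (p + 1) * \sum_(k < n.+1) k%:R * ('C(n, k)%:R * p ^+ (n - k)) = n%:R * (p + 1) ^+ n.
Proof.
case: n => [|n]; first by rewrite big_ord1 !mul0r mulr0.
rewrite big_ord_recl mul0r add0r exprS mulrCA -euler_moment0.
congr (_ * _); rewrite mulr_sumr; apply: eq_bigr => k _.
by rewrite /= /bump /= add1n subSS mulrA -natrM -mul_bin_diag natrM mulrA.
Qed.

Lemma euler_factorial_moment2 n :
  (p + 1) ^+ 2 * \sum_(k < n.+1) (k%:R * (k%:R - 1)) * ('C(n, k)%:R * p ^+ (n - k))
  = n%:R * (n%:R - 1) * (p + 1) ^+ n.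
Proof.
case: n => [|n]; first by rewrite big_ord1 !mul0r mulr0.
rewrite big_ord_recl !mul0r add0r.
have -> : \sum_(k < n.+1) ((bump 0 k)%:R * ((bump 0 k)%:R - 1)) *
            ('C(n.+1, bump 0 k)%:R * p ^+ (n.+1 - bump 0 k))
          = n.+1%:R * \sum_(k < n.+1) k%:R * ('C(n, k)%:R * p ^+ (n - k)).
  rewrite mulr_sumr; apply: eq_bigr => k _.
  have hC : k.+1%:R * 'C(n.+1, k.+1)%:R = n.+1%:R * 'C(n, k)%:R :> F.
    by rewrite -!natrM mul_bin_diag.
  rewrite /bump /= add1n subSS mulrSr addrK.
  transitivity (k%:R * (k.+1%:R * 'C(n.+1, k.+1)%:R) * p ^+ (n - k)); first ring.
  by rewrite hC; ring.
rewrite expr2 -mulrA [X in _ * X]mulrCA euler_moment1 mulrSr addrK exprS.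
ring.
Qed.

Hypothesis p1_neq0 : p + 1 != 0.

Lemma sum_euler_weight n : \sum_(k < n.+1) euler_weight n k = 1.
Proof. by rewrite -mulr_suml euler_moment0 divff // expf_neq0. Qed.

Lemma sum_euler_weight_sqr_dev n x :
  \sum_(k < n.+1) euler_weight n k * (k%:R - x) ^+ 2
  = ((n%:R - x * (p + 1)) ^+ 2 + p * n%:R) / (p + 1) ^+ 2.
Proof.
set P := (p + 1) ^+ n.
set S0 := \sum_(k < n.+1) 'C(n, k)%:R * p ^+ (n - k).
set S1 := \sum_(k < n.+1) k%:R * ('C(n, k)%:R * p ^+ (n - k)).
set S2 := \sum_(k < n.+1) (k%:R * (k%:R - 1)) * ('C(n, k)%:R * p ^+ (n - k)).
have -> : \sum_(k < n.+1) euler_weight n k * (k%:R - x) ^+ 2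
          = (S2 + (1 - 2 * x) * S1 + x ^+ 2 * S0) / P.
  rewrite /S0 /S1 /S2 !mulr_sumr -!big_split mulr_suml /=.
  by apply: eq_bigr => k _; rewrite /euler_weight; ring.
have P_neq0 : P != 0 by rewrite expf_neq0.
have -> : S0 = P := euler_moment0 n.
have -> : S1 = n%:R * P / (p + 1).
  by rewrite -(euler_moment1 n) -/S1; field.
have -> : S2 = n%:R * (n%:R - 1) * P / (p + 1) ^+ 2.
  by rewrite -(euler_factorial_moment2 n) -/S2; field.
by field; rewrite P_neq0 p1_neq0.
Qed.

End EulerWeights.

Section EulerTauberian.
Variable R : realType.
Implicit Types (p A T : R) (f : nat -> R).

Lemma euler_weight_ge0 p n k : 0 <= p -> 0 <= euler_weight p n k.
Proof. by move=> p0; rewrite divr_ge0 ?mulr_ge0 ?exprn_ge0 ?addr_ge0. Qed.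

Lemma sum_euler_weight_sqr_dev_le p m n : 0 <= p ->
  m%:R * (p + 1) <= n%:R <= m%:R * (p + 1) + 1 ->
  \sum_(k < n.+1) euler_weight p n k * (k%:R - m%:R) ^+ 2 <= m%:R + 1.
Proof.
move=> p0 /andP[xn nx]; have p1 : 0 < p + 1 by lra.
rewrite sum_euler_weight_sqr_dev ?gt_eqF // ler_pdivrMr ?exprn_gt0 //.
have m0 : 0 <= m%:R :> R by [].
have dev : (n%:R - m%:R * (p + 1)) ^+ 2 <= 1.
  by rewrite -(expr1n _ 2) ler_sqr ?nnegrE; lra.
nra.
Qed.

Lemma dist_partial_sums_le f (g : nat -> R) :
  (forall j, `|f j.+1| <= g j.+1 - g j) ->
  forall k m, `|\sum_(i < k.+1) f i - \sum_(i < m.+1) f i| <= `|g k - g m|.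
Proof.
move=> hfg.
have up m d : `|\sum_(i < (m + d).+1) f i - \sum_(i < m.+1) f i| <= g (m + d)%N - g m.
  elim: d => [|d IH]; first by rewrite addn0 !subrr normr0.
  rewrite addnS big_ord_recr /= addrAC.
  apply: le_trans (ler_normD _ _) _.
  by have := hfg (m + d)%N; lra.
move=> k m; case: (leqP m k) => [/subnKC <-|/ltnW/subnKC <-].
  exact: le_trans (up _ _) (ler_norm _).
by rewrite distrC [`|g _ - _|]distrC; exact: le_trans (up _ _) (ler_norm _).
Qed.

Lemma dist_partial_sums_sqrt_le f A :
  (forall k, Num.sqrt k%:R * `|f k| <= A) ->
  forall k m, `|\sum_(i < k.+1) f i - \sum_(i < m.+1) f i|
              <= 2 * A * `|Num.sqrt k%:R - Num.sqrt m%:R|.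
Proof.
move=> hA k m.
have A0 : 0 <= A by have := hA 0%N; rewrite sqrtr0 mul0r.
rewrite -[2 * A]ger0_norm ?mulr_ge0 // -normrM mulrBr.
apply: (dist_partial_sums_le (g := fun j => 2 * A * Num.sqrt j%:R)) => j.
set x := Num.sqrt (j%:R : R); set y := Num.sqrt (j.+1%:R : R).
have x0 : 0 <= x := sqrtr_ge0 _.
have y0 : 0 <= y := sqrtr_ge0 _.
have yx : y ^+ 2 = x ^+ 2 + 1 by rewrite !sqr_sqrtr // mulrSr.
have incr : 1 <= 2 * y * (y - x) by nra.
have := hA j.+1; rewrite -/y => hy.
have fj0 := normr_ge0 (f j.+1).
have xy : x <= y by rewrite ler_sqrt // ler_nat.
have : 0 <= `|f j.+1| * (2 * y * (y - x) - 1) by rewrite mulr_ge0 // subr_ge0.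
have : 0 <= (A - y * `|f j.+1|) * (y - x) by rewrite mulr_ge0 // subr_ge0.
nra.
Qed.

Lemma sqrt_dist_mul_le (x y : R) : 0 <= x -> 0 <= y ->
  2 * y * `|Num.sqrt x - Num.sqrt y| <= (x - y) ^+ 2 + y.
Proof.
move=> x0 y0.
have hx : x = Num.sqrt x ^+ 2 by rewrite sqr_sqrtr.
have hy : y = Num.sqrt y ^+ 2 by rewrite sqr_sqrtr.
set a := Num.sqrt x in hx *; set b := Num.sqrt y in hy *; rewrite hx hy.
have a0 : 0 <= a := sqrtr_ge0 _.
have b0 : 0 <= b := sqrtr_ge0 _.
set d := `|a - b|.
have d0 : 0 <= d := normr_ge0 _.
have -> : (a ^+ 2 - b ^+ 2) ^+ 2 = ((a + b) * d) ^+ 2.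
  by rewrite exprMn /d real_normK ?num_real //; ring.
(* AM-GM: 2 b^2 d <= 2 b (a + b) d <= ((a + b) d)^2 + b^2 *)
have : 0 <= b * a * d by rewrite !mulr_ge0.
have := sqr_ge0 ((a + b) * d - b); nra.
Qed.

Lemma norm_partial_sum_le f A m :
  (forall k, Num.sqrt k%:R * `|f k| <= A) ->
  `|\sum_(j < m.+1) f j| <= `|f 0%N| + m%:R * A.
Proof.
move=> hA; elim: m => [|m IH]; first by rewrite big_ord1 mul0r addr0.
rewrite big_ord_recr /= mulrSr.
have fm : `|f m.+1| <= A.
  apply: le_trans (hA m.+1); by rewrite ler_peMl // -{1}sqrtr1 ler_sqrt // ler1n.
by apply: le_trans (ler_normD _ _) _; lra.
Qed.

Lemma euler_mean_sub_partial_sum_le p A f m n : 0 <= p -> (0 < m)%N ->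
  (forall k, Num.sqrt k%:R * `|f k| <= A) ->
  m%:R * (p + 1) <= n%:R <= m%:R * (p + 1) + 1 ->
  `|\sum_(k < n.+1) euler_weight p n k * \sum_(j < k.+1) f j - \sum_(j < m.+1) f j|
  <= 3 * A.
Proof.
move=> p0 m0 hA hn.
have A0 : 0 <= A by have := hA 0%N; rewrite sqrtr0 mul0r.
have mR0 : 0 < m%:R :> R by rewrite ltr0n.
set s := fun j => \sum_(i < j.+1) f i; set w := euler_weight p n.
have sw : \sum_(k < n.+1) w k = 1 by apply: sum_euler_weight; lra.
have centred : \sum_(k < n.+1) w k * s k - s m = \sum_(k < n.+1) w k * (s k - s m).
  by rewrite -[s m in LHS]mul1r -sw mulr_suml -sumrB; apply: eq_bigr => k _; rewrite mulrBr.
have pointwise k : m%:R * `|s k - s m| <= A * ((k%:R - m%:R) ^+ 2 + m%:R).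
  apply: le_trans (_ : m%:R * (2 * A * `|Num.sqrt k%:R - Num.sqrt m%:R|) <= _).
    by rewrite ler_pM2l // dist_partial_sums_sqrt_le.
  rewrite [leLHS](_ : _ = A * (2 * m%:R * `|Num.sqrt k%:R - Num.sqrt m%:R|)); last by ring.
  by rewrite ler_wpM2l // sqrt_dist_mul_le.
have weighted : m%:R * `|\sum_(k < n.+1) w k * s k - s m|
                <= A * (\sum_(k < n.+1) w k * (k%:R - m%:R) ^+ 2 + m%:R).
  have -> : A * (\sum_(k < n.+1) w k * (k%:R - m%:R) ^+ 2 + m%:R)
            = \sum_(k < n.+1) w k * (A * ((k%:R - m%:R) ^+ 2 + m%:R)).
    transitivity (A * \sum_(k < n.+1) w k * (k%:R - m%:R) ^+ 2 + A * m%:R * \sum_(k < n.+1) w k).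
      by rewrite sw mulr1 mulrDr.
    by rewrite !mulr_sumr -big_split; apply: eq_bigr => k _ /=; ring.
  rewrite centred; apply: le_trans (ler_wpM2l (ltW mR0) (ler_norm_sum _ _ _)) _.
  rewrite mulr_sumr; apply: ler_sum => k _.
  have w0 : 0 <= w k := euler_weight_ge0 n k p0.
  by rewrite normrM ger0_norm // mulrCA ler_wpM2l.
rewrite -(ler_pM2l mR0); apply: le_trans weighted _.
have := sum_euler_weight_sqr_dev_le p0 hn.
have : 1 <= m%:R :> R by rewrite ler1n.
nra.
Qed.

Lemma partial_sums_bounded_of_euler p A T n0 f : 0 <= p ->
  (forall k, Num.sqrt k%:R * `|f k| <= A) ->
  (forall n, (n0 <= n)%N ->
     `|\sum_(k < n.+1) euler_weight p n k * \sum_(j < k.+1) f j| <= T) ->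
  forall m, `|\sum_(j < m.+1) f j| <= `|f 0%N| + n0%:R * A + (T + 3 * A).
Proof.
move=> p0 hA hT m.
have A0 : 0 <= A by have := hA 0%N; rewrite sqrtr0 mul0r.
have T0 : 0 <= T := le_trans (normr_ge0 _) (hT n0 (leqnn n0)).
case: (leqP m n0) => [mn0|n0m].
  apply: le_trans (norm_partial_sum_le m hA) _.
  by rewrite -addrA lerD2l ler_wpDr ?addr_ge0 ?mulr_ge0 // ler_wpM2r // ler_nat.
have m0 : (0 < m)%N := leq_ltn_trans (leq0n n0) n0m.
(* the weights of order n then have mean n / (p + 1) within 1 / (p + 1) of m *)
pose x := m%:R * (p + 1); pose n := (Num.truncn x).+1.
have x0 : 0 <= x by rewrite mulr_ge0 // addr_ge0.
have hn : x <= n%:R <= x + 1.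
  by rewrite ltW ?truncnS_gt //= -natr1 lerD2r truncn_le.
have mn : (m <= n)%N.
  by rewrite -(ler_nat R); apply: le_trans (andP hn).1; rewrite ler_peMr //; lra.
have := euler_mean_sub_partial_sum_le p0 m0 hA hn.
have := hT n (leq_trans (ltnW n0m) mn).
set t := \sum_(k < n.+1) _; set s := \sum_(j < m.+1) _ => ht hts.
rewrite -[s in `|s|](subrK t); apply: le_trans (ler_normD _ _) _; rewrite distrC.
have := normr_ge0 (f 0%N); have : 0 <= n0%:R * A by rewrite mulr_ge0.
lra.
Qed.

End EulerTauberian.

Section LevelEndpoints.
Variable R : realType.
Implicit Types (f g : lvl R) (u : R -> R).

Definition endpoint (b : bool) (x : R * R) : R := if b then x.1 else x.2.

Definition lvl_bounded f :=
  exists B, forall b a, 0 <= a <= 1 -> `|endpoint b (f a)| <= B.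

Lemma endpoint_foldr_ladd b (s : seq (lvl R)) a :
  endpoint b (foldr (@ladd R) (@lzero R) s a) = \sum_(f <- s) endpoint b (f a).
Proof.
elim: s => [|f s IH] /=; first by rewrite big_nil; case: b.
by rewrite big_cons -IH; case: b {IH}.
Qed.

Lemma endpoint_psum b (u : nat -> R -> R) n a :
  endpoint b (psum u n a) = \sum_(k < n.+1) endpoint b (levels (u k) a).
Proof. by rewrite endpoint_foldr_ladd big_map -[iota 0 _]/(index_iota 0 n.+1) big_mkord. Qed.

Lemma endpoint_euler_mean b p (u : nat -> R -> R) n a : 0 <= p ->
  endpoint b (euler_mean p u n a)
  = \sum_(k < n.+1) euler_weight p n k * \sum_(j < k.+1) endpoint b (levels (u j) a).
Proof.
move=> p0; rewrite endpoint_foldr_ladd big_map -[iota 0 _]/(index_iota 0 n.+1) big_mkord.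
apply: eq_bigr => k _; rewrite /lscale -/(euler_weight p n k) euler_weight_ge0 //.
by rewrite -endpoint_psum; case: b.
Qed.

Lemma lvl_bounded_foldr_map (T : Type) (F : T -> lvl R) (s : seq T) :
  (forall x, lvl_bounded (F x)) -> lvl_bounded (foldr (@ladd R) (@lzero R) (map F s)).
Proof.
move=> hF; elim: s => [|x s [B hB]] /=.
  by exists 0 => b a _; case: b; rewrite /= normr0.
have [Bx hBx] := hF x; exists (Bx + B) => b a ha.
have := hBx b a ha; have := hB b a ha.
by case: b => /= h1 h2; apply: le_trans (ler_normD _ _) _; rewrite lerD.
Qed.

Lemma lvl_bounded_lscale k f : lvl_bounded f -> lvl_bounded (lscale k f).
Proof.
move=> [B hB]; exists (`|k| * B) => b a ha.
by rewrite /lscale; case: ifP => _; case: b; rewrite /= normrM ler_wpM2l ?(hB true) ?(hB false).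
Qed.

Lemma lvl_bounded_levels u : fuzzy_number u -> lvl_bounded (levels u).
Proof.
case=> _ [t1 ht1] _ _ /compact_bounded [M0 [_ hM0]].
have supp_bounded x : fsupp u x -> `|x| <= `|M0| + 1.
  by apply: hM0; rewrite (le_lt_trans (ler_norm _)) // ltrDl.
set M := `|M0| + 1 in supp_bounded.
have level_sub a : 0 <= a <= 1 -> level u a `<=` fsupp u /\ level u a t1.
  move=> /andP[a0 a1]; rewrite /level; case: eqP => [_|/eqP an0].
    by split => //; apply: subset_closure; rewrite /= ht1 ltr01.
  have ap : 0 < a by rewrite lt_neqAle eq_sym an0.
  split; last by rewrite /= ht1.
  by move=> t /= h; apply: subset_closure => /=; exact: lt_le_trans h.
exists M => b a /level_sub [sub lt1].
have ub x : level u a x -> - M <= x <= M by move=> /sub /supp_bounded; rewrite ler_norml.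
have [lo hi] := andP (ub t1 lt1).
have hlb : has_lbound (level u a) by exists (- M) => x /ub /andP[].
have hub : has_ubound (level u a) by exists M => x /ub /andP[].
rewrite ler_norml; case: b; rewrite /levels /lend /rend /=; apply/andP; split.
- by apply: lb_le_inf; [exists t1 | move=> x /ub /andP[]].
- exact: le_trans (ge_inf hlb lt1) hi.
- exact: le_trans lo (ub_le_sup hub lt1).
- by apply: ge_sup; [exists t1 | move=> x /ub /andP[]].
Qed.

Lemma endpoint_levels_fzero b a : 0 <= a <= 1 -> endpoint b (levels (@fzero R) a) = 0.
Proof.
move=> /andP[a0 a1].
rewrite /levels /lend /rend.
suff -> : level (@fzero R) a = [set 0] by rewrite inf1 sup1; case: b.
rewrite /level; case: eqP => [_|/eqP an0].
  rewrite /fsupp; have -> : [set t | 0 < fzero t] = [set 0 : R].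
    apply/seteqP; split => t /=; rewrite /fzero; last by move=> ->; rewrite eqxx ltr01.
    by case: eqP => // _; rewrite ltxx.
  apply/esym/closure_id; apply: accessible_closed_set1.
  exact/hausdorff_accessible/Rhausdorff.
apply/seteqP; split => t /=; rewrite /fzero; last by move=> ->; rewrite eqxx.
case: eqP => // _ ha; suff : 0 < a by rewrite ltNge ha.
by rewrite lt_neqAle eq_sym an0.
Qed.

Lemma lvl_bounded_fzero : lvl_bounded (levels (@fzero R)).
Proof. by exists 0 => b a ha; rewrite endpoint_levels_fzero ?normr0. Qed.

Lemma Dist_le f g M :
  (forall b a, 0 <= a <= 1 -> `|endpoint b (f a) - endpoint b (g a)| <= M) ->
  Dist f g <= M.
Proof.
move=> hM; apply: ge_sup.
  by exists (Num.max `|(f 0).1 - (g 0).1| `|(f 0).2 - (g 0).2|); exists 0; rewrite ?lexx ?ler01.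
by move=> _ [a ha ->]; rewrite ge_max (hM true) ?(hM false).
Qed.

(* [Dist] is a [sup], which is junk (0) for an unbounded set. *)
Lemma le_Dist f g b a : lvl_bounded f -> lvl_bounded g -> 0 <= a <= 1 ->
  `|endpoint b (f a) - endpoint b (g a)| <= Dist f g.
Proof.
move=> [Bf hBf] [Bg hBg] ha.
have hs : has_sup [set d | exists2 a, 0 <= a <= 1 &
                     d = Num.max `|(f a).1 - (g a).1| `|(f a).2 - (g a).2|].
  split; first by exists (Num.max `|(f 0).1 - (g 0).1| `|(f 0).2 - (g 0).2|);
                   exists 0; rewrite ?lexx ?ler01.
  exists (Bf + Bg) => _ [a' ha' ->].
  by rewrite ge_max; apply/andP; split; apply: le_trans (ler_normB _ _) _;
    apply: lerD; [exact: (hBf true) | exact: (hBg true) | exact: (hBf false) | exact: (hBg false)].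
apply: le_trans (sup_upper_bound hs _); last by exists a.
by case: b; rewrite /= le_max lexx ?orbT.
Qed.

End LevelEndpoints.

Section FuzzyEulerSeries.
Variables (R : realType) (p : R) (u : nat -> R -> R).
Hypothesis u_fuzzy : forall n, fuzzy_number (u n).

Lemma lvl_bounded_psum n : lvl_bounded (psum u n).
Proof. by apply: lvl_bounded_foldr_map => k; exact: lvl_bounded_levels. Qed.

Lemma lvl_bounded_euler_mean n : lvl_bounded (euler_mean p u n).
Proof.
by apply: lvl_bounded_foldr_map => k; apply: lvl_bounded_lscale; exact: lvl_bounded_psum.
Qed.

Lemma euler_mean_eventually_bounded (nu : R -> R) : fuzzy_number nu ->
  (fun n => Dist (euler_mean p u n) (levels nu)) @ \oo --> 0 ->
  exists T n0, forall b a, 0 <= a <= 1 -> forall n, (n0 <= n)%N ->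
    `|endpoint b (euler_mean p u n a)| <= T.
Proof.
move=> /lvl_bounded_levels nu_bounded /cvgr_dist_lt/(_ 1 ltr01) [n0 _ near_nu].
have [B hB] := nu_bounded.
exists (1 + B), n0 => b a ha n n0n.
have near1 : `|endpoint b (euler_mean p u n a) - endpoint b (levels nu a)| <= 1.
  apply: le_trans (le_Dist b (lvl_bounded_euler_mean n) nu_bounded ha) _.
  by have := near_nu n n0n; rewrite /= sub0r normrN => /ltW /(le_trans (ler_norm _)).
rewrite -[endpoint b _](subrK (endpoint b (levels nu a))).
by apply: le_trans (ler_normD _ _) _; rewrite lerD ?hB.
Qed.

Lemma levels_sqrt_bounded C N :
  (forall n, (N <= n)%N -> Num.sqrt n%:R * Dist (levels (u n)) (levels (@fzero R)) <= C) ->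
  exists A, forall b a, 0 <= a <= 1 -> forall k,
    Num.sqrt k%:R * `|endpoint b (levels (u k) a)| <= A.
Proof.
move=> hC; have [B hB] := boolp.choice (fun k => lvl_bounded_levels (u_fuzzy k)).
exists (`|C| + \sum_(k < N) `|Num.sqrt k%:R * B k|) => b a ha k.
have sq0 : 0 <= Num.sqrt k%:R :> R := sqrtr_ge0 _.
case: (ltnP k N) => [kN|Nk].
  apply: le_trans (ler_wpM2l sq0 (hB k b a ha)) _.
  apply: le_trans (ler_norm _) _; apply: ler_wpDl => //.
  by rewrite (bigD1 (Ordinal kN)) //= lerDl sumr_ge0.
apply: le_trans (ler_wpM2l sq0 _) (le_trans (hC k Nk) _).
  have := le_Dist b (lvl_bounded_levels (u_fuzzy k)) (@lvl_bounded_fzero R) ha.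
  by rewrite endpoint_levels_fzero // subr0.
by apply: le_trans (ler_norm C) _; rewrite lerDl sumr_ge0.
Qed.

End FuzzyEulerSeries.

Unset Implicit Arguments.

Theorem mainTheorem6 (R : realType) (p : R) (u : nat -> R -> R) (nu : R -> R) :
  0 < p ->
  (forall n, fuzzy_number (u n)) ->
  fuzzy_number nu ->
  (fun n => Dist (euler_mean p u n) (levels nu)) @ \oo --> (0 : R) ->
  (exists C : R, exists N : nat, forall n : nat, (N <= n)%N ->
      Num.sqrt (n%:R) * Dist (levels (u n)) (levels (@fzero R)) <= C) ->
  exists M : R, 0 < M /\ forall n : nat, Dist (psum u n) (levels (@fzero R)) < M.
Proof.
move=> /ltW p0 hu hnu hcv [C [N hC]].
have [T [n0 hT]] := euler_mean_eventually_bounded hu hnu hcv.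
have [A hA] := levels_sqrt_bounded hu hC.
have [B0 hB0] := lvl_bounded_levels (hu 0%N).
pose M := B0 + n0%:R * A + (T + 3 * A).
have hM b a n : 0 <= a <= 1 -> `|endpoint b (psum u n a)| <= M.
  move=> ha; rewrite endpoint_psum.
  pose f j := endpoint b (levels (u j) a).
  apply: le_trans (partial_sums_bounded_of_euler (T := T) (f := f) p0 (hA b a ha) _ n) _.
    by move=> n' n0n; have := hT b a ha n' n0n; rewrite endpoint_euler_mean.
  by rewrite /M -!addrA lerD2r; exact: hB0.
have M_ge0 : 0 <= M by apply: le_trans (normr_ge0 _) (hM true 0 0%N _); rewrite lexx ler01.
exists (M + 1); split; first lra.
move=> n; apply: (@le_lt_trans _ _ M); last by rewrite ltrDl.
by apply: Dist_le => b a ha; rewrite endpoint_levels_fzero // subr0 hM.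
Qed.
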